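(* Let $S_0,S_1,S_2$ be pair-partitions of $[2k]$. Then, as functions on Young diagrams, $N^{(2)}_{S_0,S_1,S_2}=2^{|\mathcal{L}(S_0,S_1)|}\,N^{(1)}_{S_0,S_1,S_2}$.
   Context: Pair-partitions of $[2k]$ are sets of disjoint two-element subsets with union $[2k]$, identified with fixed-point-free involutions. $\mathcal{L}(S_0,S_1)$ is the bipartite graph with a black vertex per pair of $S_0$, a white vertex per pair of $S_1$, and an edge for each $i\in[2k]$ joining the pairs containing $i$; it is a union of loops and $|\mathcal{L}(S_0,S_1)|$ is the number of loops. $N^{(1)}_{S_0,S_1,S_2}(\lambda)$ is the number of functions $f$ from $[2k]$ to the boxes of $\lambda$ such that for all $l$: $f(l)=f(S_0(l))$; $f(l)$ and $f(S_1(l))$ are in the same column; $f(l)$ and $f(S_2(l))$ are in the same row. $2\lambda=(2\lambda_1,2\lambda_2,\dots)$; two boxes of $2\lambda$ are neighbors if they are in the same row and in columns $2i+1$ and $2i+2$ for some $i\ge0$. $N^{(2)}_{S_0,S_1,S_2}(\lambda)$ is the number of functions $f$ from $[2k]$ to the boxes of $2\lambda$ such that for all $l$: $f(l)$ and $f(S_0(l))$ are neighbors; $f(l)$ and $f(S_0\circ S_1(l))$ are in the same column; $f(l)$ and $f(S_2(l))$ are in the same row. *)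

From mathcomp Require Import all_boot.
Set Implicit Arguments. Unset Strict Implicit. Unset Printing Implicit Defensive.

Definition pair_partition (n : nat) (S : 'I_n -> 'I_n) : Prop :=
  forall i, S (S i) = i /\ S i != i.

Definition young_diagram (lam : seq nat) : bool :=
  sorted geq lam && all (fun x => 0 < x) lam.

(* Boxes are (row, column), 0-indexed; the finite ambient type bounds them. *)
Definition boxT (lam : seq nat) : finType := ('I_(size lam) * 'I_(sumn lam))%type.
Definition in_diag (lam : seq nat) (b : boxT lam) : bool :=
  (b.2 : nat) < nth 0 lam b.1.
Definition same_row lam (a b : boxT lam) : bool := (a.1 : nat) == b.1.
Definition same_col lam (a b : boxT lam) : bool := (a.2 : nat) == b.2.

Definition double_diag (lam : seq nat) : seq nat := map double lam.

(* neighbours: same row, (1-indexed) columns 2i+1 and 2i+2, i.e. 0-indexed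
   columns 2i and 2i+1 (two distinct boxes). *)
Definition neighbors lam (a b : boxT lam) : bool :=
  same_row a b && ((a.2 : nat)./2 == (b.2 : nat)./2) && ((a.2 : nat) != b.2).

Definition N1 (n : nat) (S0 S1 S2 : 'I_n -> 'I_n) (lam : seq nat) : nat :=
  #|[pred f : {ffun 'I_n -> boxT lam} |
     [forall l, [&& in_diag (f l), f l == f (S0 l),
                    same_col (f l) (f (S1 l)) & same_row (f l) (f (S2 l))]]]|.

Definition N2 (n : nat) (S0 S1 S2 : 'I_n -> 'I_n) (lam : seq nat) : nat :=
  #|[pred f : {ffun 'I_n -> boxT (double_diag lam)} |
     [forall l, [&& in_diag (f l), neighbors (f l) (f (S0 l)),
                    same_col (f l) (f (S0 (S1 l))) & same_row (f l) (f (S2 l))]]]|.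

(* The bipartite graph L(S0,S1): black vertices (false, {i, S0 i}),
   white vertices (true, {i, S1 i}); a black and a white vertex are joined
   by an edge for each i in both pairs. *)
Definition LvertT (n : nat) : finType := (bool * {set 'I_n})%type.
Definition Lvert n (S0 S1 : 'I_n -> 'I_n) : pred (LvertT n) :=
  fun v => [exists i, v == (false, [set i; S0 i])] || [exists i, v == (true, [set i; S1 i])].
Definition Ladj n (S0 S1 : 'I_n -> 'I_n) : rel (LvertT n) :=
  fun v w => [&& Lvert S0 S1 v, Lvert S0 S1 w, v.1 != w.1 & (v.2 :&: w.2 != set0)].
(* number of loops = number of connected components of L(S0,S1) *)
Definition nloops n (S0 S1 : 'I_n -> 'I_n) : nat := n_comp (Ladj S0 S1) (Lvert S0 S1).

From mathcomp Require Import all_boot zify.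
Set Implicit Arguments. Unset Strict Implicit. Unset Printing Implicit Defensive.

(* Read a box of [2 lam] as a box of [lam] together with the parity of its column.
   A function counted by [N2] becomes a function counted by [N1] together with bits
   [c] that flip along [S0] and are preserved along [S0 \o S1].  The loops of
   [L(S0, S1)] have even length, so some colouring [eps] of [[2k]] flips along both
   [S0] and [S1]; then [c (+) eps] is exactly a colouring constant on each loop, and
   there are [2 ^ |L(S0, S1)|] of those. *)

Lemma card_in_bij (T U : finType) (A : {pred T}) (B : {pred U}) (f : T -> U) (g : U -> T) :
  {in A, forall x, f x \in B} -> {in B, forall y, g y \in A} ->
  {in A, cancel f g} -> {in B, cancel g f} -> #|A| = #|B|.
Proof.
move=> fAB gBA fK gK; apply/eqP; rewrite eqn_leq; apply/andP; split.
- rewrite -(card_in_imset (can_in_inj fK)); apply: subset_leq_card.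
  by apply/subsetP => _ /imsetP[x xA ->]; apply: fAB.
- rewrite -(card_in_imset (can_in_inj gK)); apply: subset_leq_card.
  by apply/subsetP => _ /imsetP[y yB ->]; apply: gBA.
Qed.

Lemma connect_fun_eq (T : finType) (R : eqType) (e : rel T) (f : T -> R) :
  (forall x y, e x y -> f x = f y) -> forall x y, connect e x y -> f x = f y.
Proof.
move=> fe x y xy; apply/eqP.
rewrite -[_ == _]/(x \in [pred z | f z == f y]) (closed_connect _ xy) ?inE //.
by move=> u v /fe; rewrite !inE => ->.
Qed.

Section ComponentConstantFunctions.
Variables (T U : finType) (e : rel T) (a : pred T) (u0 : U).
Hypotheses (e_sym : connect_sym e) (a_closed : forall x y, e x y -> a x = a y).

Definition component_constant := [pred h : {ffun T -> U} |
  [forall x, forall y, e x y ==> (h x == h y)] && [forall x, ~~ a x ==> (h x == u0)]].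

Lemma component_constantP (h : {ffun T -> U}) :
  reflect ((forall x y, e x y -> h x = h y) /\ (forall x, ~~ a x -> h x = u0))
          (h \in component_constant).
Proof.
apply: (iffP andP) => [[/forallP He /forallP Ha] | [He Ha]]; split.
- by move=> x y exy; apply/eqP; move/forallP/(_ y): (He x); rewrite exy.
- by move=> x nax; apply/eqP; move: (Ha x); rewrite nax.
- by apply/forallP => x; apply/forallP => y; apply/implyP => /He ->.
- by apply/forallP => x; apply/implyP => /Ha ->.
Qed.

Lemma card_component_constant : #|component_constant| = #|U| ^ n_comp e a.
Proof.
pose D := [pred x | roots e x && a x].
rewrite -(card_pffun_on u0 D predT).
apply: (@card_in_bij _ _ _ _ (fun h : {ffun T -> U} => [ffun x => if D x then h x else u0])
                    (fun h : {ffun T -> U} => [ffun x => if a x then h (root e x) else u0])).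
- move=> h _; apply/pffun_onP; split; last by move=> ? _.
  by apply/subsetP => x; rewrite inE ffunE; case: ifP => [Dx _ | _]; rewrite ?eqxx.
- move=> h /pffun_onP[_ _]; apply/component_constantP; split=> [x y exy|x /negbTE ax].
    by rewrite !ffunE (a_closed exy) (rootP e_sym (connect1 exy)).
  by rewrite ffunE ax.
- move=> h /component_constantP[he ha]; apply/ffunP => x; rewrite !ffunE inE /=.
  rewrite roots_root // -(connect_fun_eq a_closed (connect_root e x)).
  case: (boolP (a x)) => [_ | /ha //]; exact/esym/(connect_fun_eq he (connect_root e x)).
- move=> h /pffun_onP[/subsetP h_supp _]; apply/ffunP => x; rewrite !ffunE.
  case Dx: (D x); first by case/andP: Dx => /eqP -> ->.
  by apply/esym/eqP; apply: contraFT Dx => /h_supp; rewrite inE.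
Qed.

End ComponentConstantFunctions.

Section AlternatingColouring.
Variables (T : finType) (S0 S1 : T -> T).
Hypotheses (S0K : involutive S0) (S1K : involutive S1).
Hypotheses (S0_neq : forall i, S0 i != i) (S1_neq : forall i, S1 i != i).

Let rot i := S1 (S0 i).
Let rot_inv i := S0 (S1 i).

Let rotK : cancel rot rot_inv.
Proof. by move=> i; rewrite /rot /rot_inv S1K S0K. Qed.

Let S0_iter_rot m i : S0 (iter m rot i) = iter m rot_inv (S0 i).
Proof. by elim: m => //= m <-. Qed.

Let iter_rotK m : cancel (iter m rot) (iter m rot_inv).
Proof. by elim: m => // m IH i; rewrite iterSr iterS rotK IH. Qed.

(* An orbit of [rot] leading from [i] to [S0 i] has its midpoint [j] fixed by [S0]
   (even length) or [S0 j] fixed by [S1] (odd length). *)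
Lemma not_fconnect_rot_S0 i : ~~ fconnect rot i (S0 i).
Proof.
apply/negP => /iter_findex; move: (findex _ _ _) => m.
rewrite -[m]odd_double_half -addnn; move: (odd m) (m./2) => b h.
rewrite addnCA iterD => E; set j := iter h rot i.
have : S0 j = iter b rot j by rewrite S0_iter_rot -E iter_rotK iterD.
case: b {E} => /= [Ej | /eqP]; last by rewrite (negbTE (S0_neq _)).
by have /eqP := S1_neq (S0 j); rewrite {2}Ej.
Qed.

Let rot_sym : connect_sym (frel rot).
Proof. exact/fconnect_sym/(can_inj rotK). Qed.

Let froot_S1 i : froot rot (S1 i) = froot rot (S0 i).
Proof. by apply/esym/(rootP rot_sym); rewrite -{2}[i]S0K; apply: fconnect1. Qed.

Let froot_S0S1 i : froot rot (S0 (S1 i)) = froot rot i.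
Proof. by apply/(rootP rot_sym); rewrite -{2}[i]S1K -{2}[S1 i]S0K; apply: fconnect1. Qed.

Let enum_rank_froot_S0 i : enum_rank (froot rot i) != enum_rank (froot rot (S0 i)).
Proof.
by rewrite (inj_eq enum_rank_inj); apply: contraNneq (not_fconnect_rot_S0 i) => /(rootP rot_sym).
Qed.

(* Each loop is the union of two [rot]-orbits swapped by [S0] and [S1]; we colour an
   element by which of the two orbits it lies in. *)
Lemma alternating_colouring :
  exists eps : T -> bool, forall i, eps (S0 i) = ~~ eps i /\ eps (S1 i) = ~~ eps i.
Proof.
exists (fun i => enum_rank (froot rot i) < enum_rank (froot rot (S0 i))) => i.
have flip (m p : 'I_#|T|) : m != p -> (p < m) = ~~ (m < p).
  by rewrite -val_eqE /=; case: ltngtP.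
by rewrite S0K froot_S1 froot_S0S1 flip ?enum_rank_froot_S0.
Qed.

End AlternatingColouring.

Section LoopColourings.
Variables (n : nat) (S0 S1 : 'I_n -> 'I_n).
Hypothesis S0K : involutive S0.

Definition loop_colourings := [pred d : {ffun 'I_n -> bool} |
  [forall l, (d (S0 l) == d l) && (d (S1 l) == d l)]].

Let black i : LvertT n := (false, [set i; S0 i]).
Let white i : LvertT n := (true, [set i; S1 i]).

Lemma LvertP v : reflect (exists i, v = black i \/ v = white i) (Lvert S0 S1 v).
Proof.
apply: (iffP orP) => [[] /existsP[i /eqP ->] | [i [] ->]].
- by exists i; left.
- by exists i; right.
- by left; apply/existsP; exists i.
- by right; apply/existsP; exists i.
Qed.

Lemma Ladj_black_white i j x :
  x \in [set i; S0 i] -> x \in [set j; S1 j] -> Ladj S0 S1 (black i) (white j).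
Proof.
move=> xi xj; apply/and4P; split=> //; first by apply/LvertP; exists i; left.
  by apply/LvertP; exists j; right.
by apply/set0Pn; exists x; rewrite inE xi xj.
Qed.

Lemma black_S0 i : black (S0 i) = black i.
Proof. by rewrite /black S0K setUC. Qed.

Lemma loop_colouring_const d v x y : d \in loop_colourings -> Lvert S0 S1 v ->
  x \in v.2 -> y \in v.2 -> d x = d y.
Proof.
move=> /forallP dS /LvertP[i [] -> /=] /set2P[] -> /set2P[] -> //.
all: by case/andP: (dS i) => /eqP E0 /eqP E1; rewrite ?E0 ?E1.
Qed.

Let vertex_colour (d : {ffun 'I_n -> bool}) : {ffun LvertT n -> bool} :=
  [ffun v => Lvert S0 S1 v && [exists p in v.2, d p]].

Lemma vertex_colourE d v x : d \in loop_colourings -> Lvert S0 S1 v -> x \in v.2 ->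
  vertex_colour d v = d x.
Proof.
move=> dS Lv xv; rewrite ffunE Lv; apply/existsP/idP => [[p /andP[pv]] | dx].
  by rewrite (loop_colouring_const dS Lv pv xv).
by exists x; rewrite xv.
Qed.

Lemma card_loop_colourings : #|loop_colourings| = 2 ^ nloops S0 S1.
Proof.
have Ladj_sym : connect_sym (Ladj S0 S1).
  by apply: sym_connect_sym => v w; rewrite /Ladj eq_sym setIC; do 2!case: (Lvert _ _ _).
have Ladj_Lvert v w : Ladj S0 S1 v w -> Lvert S0 S1 v = Lvert S0 S1 w.
  by case/and4P=> -> ->.
rewrite /nloops -card_bool -(card_component_constant false Ladj_sym Ladj_Lvert).
apply: (@card_in_bij _ _ _ _ vertex_colour (fun h => [ffun i => h (black i)])).
- move=> d dS; apply/component_constantP; split=> [v w vw | v /negbTE Lv]; last first.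
    by rewrite ffunE Lv.
  case/and4P: vw => Lv Lw _ /set0Pn[x]; rewrite inE => /andP[xv xw].
  by rewrite (vertex_colourE dS Lv xv) (vertex_colourE dS Lw xw).
- move=> h /component_constantP[hE _]; apply/forallP => l; rewrite !ffunE black_S0 eqxx /=.
  have to_white i x : x \in [set i; S0 i] -> x \in [set l; S1 l] -> h (black i) = h (white l).
    by move=> xi xl; apply/hE/(Ladj_black_white xi xl).
  by rewrite (to_white _ (S1 l)) ?(to_white _ l) // !inE eqxx ?orbT.
- move=> d dS; apply/ffunP => i; rewrite ffunE.
  by apply: vertex_colourE; rewrite ?inE ?eqxx //; apply/LvertP; exists i; left.
- move=> h /component_constantP[hE hout]; apply/ffunP => v; rewrite ffunE.
  have [Lv | /hout -> //] := boolP (Lvert S0 S1 v).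
  have [p0 p0v] : exists p, p \in v.2 by case/LvertP: Lv => i [] ->; exists i; rewrite !inE eqxx.
  have black_v p : p \in v.2 -> h (black p) = h v.
    case/LvertP: Lv => i [] -> pv; last first.
      by apply: hE; apply: (Ladj_black_white (x := p)) => //; rewrite !inE eqxx.
    by case/set2P: pv => ->; rewrite ?black_S0.
  apply/existsP/idP => [[p /andP[pv]] | hv]; first by rewrite ffunE black_v.
  by exists p0; rewrite p0v ffunE black_v.
Qed.

End LoopColourings.

Section DoubledDiagram.
Variable lam : seq nat.

Lemma sumn_double_diag : sumn (double_diag lam) = (sumn lam).*2.
Proof. by elim: lam => //= x s IH; rewrite IH doubleD. Qed.

Lemma size_double_diag : size (double_diag lam) = size lam.
Proof. exact: size_map. Qed.

Lemma nth_double_diag r : nth 0 (double_diag lam) r = (nth 0 lam r).*2.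
Proof. by elim: lam r => [|x s IH] []. Qed.

Lemma double_col_subproof (c : 'I_(sumn lam)) (b : bool) :
  b + c.*2 < sumn (double_diag lam).
Proof. by rewrite sumn_double_diag -!muln2; case: b; have := ltn_ord c; lia. Qed.

Lemma half_col_subproof (c : 'I_(sumn (double_diag lam))) : c./2 < sumn lam.
Proof. by rewrite ltn_half_double -sumn_double_diag. Qed.

Definition double_box (x : boxT lam) (b : bool) : boxT (double_diag lam) :=
  (cast_ord (esym size_double_diag) x.1, Ordinal (double_col_subproof x.2 b)).

Definition halve_box (y : boxT (double_diag lam)) : boxT lam :=
  (cast_ord size_double_diag y.1, Ordinal (half_col_subproof y.2)).

Lemma double_boxK x b : halve_box (double_box x b) = x.
Proof. by case: x => r c; congr pair; apply: val_inj; rewrite /= ?half_bit_double. Qed.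

Lemma halve_boxK y : double_box (halve_box y) (odd y.2) = y.
Proof. by case: y => r c; congr pair; apply: val_inj; rewrite /= ?odd_double_half. Qed.

Lemma odd_double_box x b : odd (double_box x b).2 = b.
Proof. by rewrite /= oddD odd_double addbF oddb. Qed.

Lemma in_diag_double_box x b : in_diag (double_box x b) = in_diag x.
Proof. by rewrite /in_diag /= nth_double_diag -!muln2; case: b; apply/idP/idP; lia. Qed.

Lemma same_row_double_box x b x' b' :
  same_row (double_box x b) (double_box x' b') = same_row x x'.
Proof. by []. Qed.

Lemma same_col_double_box x b x' b' :
  same_col (double_box x b) (double_box x' b') = same_col x x' && (b == b').
Proof.
rewrite /same_col /=; move: (val x.2) (val x'.2) => c c'.
apply/eqP/andP => [E | [/eqP -> /eqP -> //]].
split; apply/eqP.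
  by move/(congr1 half): E; rewrite !half_bit_double.
by move/(congr1 odd): E; rewrite !oddD !odd_double !addbF !oddb.
Qed.

Lemma neighbors_double_box x b x' b' :
  neighbors (double_box x b) (double_box x' b') = (x == x') && (b != b').
Proof.
rewrite -[x == x']/(same_row x x' && same_col x x') /neighbors /same_col /=.
rewrite !half_bit_double -!andbA; congr andb; case: eqP => [-> | _] //=.
by rewrite eqn_add2r; case: b b' => [] [].
Qed.

End DoubledDiagram.

Section DoubledCount.
Variables (n : nat) (S0 S1 S2 : 'I_n -> 'I_n) (lam : seq nat) (eps : 'I_n -> bool).
Hypotheses (eps_S0 : forall i, eps (S0 i) = ~~ eps i) (eps_S1 : forall i, eps (S1 i) = ~~ eps i).

Let N1_set := [pred g : {ffun 'I_n -> boxT lam} |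
  [forall l, [&& in_diag (g l), g l == g (S0 l),
                 same_col (g l) (g (S1 l)) & same_row (g l) (g (S2 l))]]].
Let N2_set := [pred f : {ffun 'I_n -> boxT (double_diag lam)} |
  [forall l, [&& in_diag (f l), neighbors (f l) (f (S0 l)),
                 same_col (f l) (f (S0 (S1 l))) & same_row (f l) (f (S2 l))]]].

Let double_fun (g : {ffun 'I_n -> boxT lam}) (d : {ffun 'I_n -> bool}) :=
  [ffun l => double_box (g l) (d l (+) eps l)].

Lemma double_fun_N2 g d :
  (double_fun g d \in N2_set) = (g \in N1_set) && (d \in loop_colourings S0 S1).
Proof.
have eps_S0S1 l : eps (S0 (S1 l)) = eps l by rewrite eps_S0 eps_S1 negbK.
have xor_neqN b b' e : (b (+) e != b' (+) ~~ e) = (b == b') by case: b b' e => [] [] [].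
have xor_eq b b' e : (b (+) e == b' (+) e) = (b == b') by case: b b' e => [] [] [].
have N2_at l : [&& in_diag (double_fun g d l),
    neighbors (double_fun g d l) (double_fun g d (S0 l)),
    same_col (double_fun g d l) (double_fun g d (S0 (S1 l)))
  & same_row (double_fun g d l) (double_fun g d (S2 l))] =
  [&& in_diag (g l), (g l == g (S0 l)) && (d l == d (S0 l)),
      same_col (g l) (g (S0 (S1 l))) && (d l == d (S0 (S1 l))) & same_row (g l) (g (S2 l))].
  by rewrite !ffunE in_diag_double_box neighbors_double_box same_col_double_box
             same_row_double_box eps_S0 eps_S0S1 xor_neqN xor_eq.
rewrite !inE; apply/forallP/andP => [N2g | [/forallP N1g /forallP Ld] l]; last first.
  have /and4P[gi g_S0 g_S1 gr] := N1g l; have /and4P[_ /eqP g_S1S0 _ _] := N1g (S1 l).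
  case/andP: (Ld l) => /eqP d_S0 /eqP d_S1; case/andP: (Ld (S1 l)) => /eqP d_S1S0 _.
  by rewrite N2_at gi g_S0 gr -g_S1S0 g_S1 d_S0 d_S1S0 d_S1 !eqxx.
split; apply/forallP => l; move: (N2g l) (N2g (S1 l)); rewrite !N2_at.
  move=> /and4P[gi /andP[g_S0 _] /andP[gc _] gr] /and4P[_ /andP[/eqP g_S1 _] _ _].
  by rewrite gi g_S0 gr g_S1 gc.
move=> /and4P[_ /andP[_ /eqP d_S0] /andP[_ /eqP d_S0S1] _] /and4P[_ /andP[_ /eqP d_S1] _ _].
by rewrite d_S1 -d_S0S1 -d_S0 !eqxx.
Qed.

Let halve_fun (f : {ffun 'I_n -> boxT (double_diag lam)}) :=
  ([ffun l => halve_box (f l)], [ffun l => odd (f l).2 (+) eps l]).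

Lemma halve_funK f : double_fun (halve_fun f).1 (halve_fun f).2 = f.
Proof. by apply/ffunP => l; rewrite !ffunE -addbA addbb addbF halve_boxK. Qed.

Lemma double_funK g d : halve_fun (double_fun g d) = (g, d).
Proof.
congr pair; apply/ffunP => l; rewrite !ffunE ?double_boxK //.
by rewrite odd_double_box -addbA addbb addbF.
Qed.

Lemma N2_eq_N1_mul : N2 S0 S1 S2 lam = N1 S0 S1 S2 lam * #|loop_colourings S0 S1|.
Proof.
change (#|N2_set| = #|N1_set| * #|loop_colourings S0 S1|).
rewrite -(cardsE N1_set) -(cardsE (loop_colourings S0 S1)) -cardsX.
apply: (@card_in_bij _ _ _ _ halve_fun (fun p => double_fun p.1 p.2)).
- by move=> f; rewrite -{1}(halve_funK f) double_fun_N2 in_setX !inE.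
- by case=> g d; rewrite double_fun_N2 in_setX !inE.
- by move=> f _; rewrite halve_funK.
- by case=> g d _; rewrite double_funK.
Qed.

End DoubledCount.

Theorem lemma3p2 (k : nat) (S0 S1 S2 : 'I_(2 * k) -> 'I_(2 * k)) :
  pair_partition S0 -> pair_partition S1 -> pair_partition S2 ->
  forall lam : seq nat, young_diagram lam ->
    N2 S0 S1 S2 lam = 2 ^ nloops S0 S1 * N1 S0 S1 S2 lam.
Proof.
move=> S0_pp S1_pp _ lam _.
have S0K : involutive S0 by move=> i; case: (S0_pp i).
have S1K : involutive S1 by move=> i; case: (S1_pp i).
have [eps eps_flip] :=
  alternating_colouring S0K S1K (fun i => (S0_pp i).2) (fun i => (S1_pp i).2).
rewrite (N2_eq_N1_mul S2 lam (fun i => (eps_flip i).1) (fun i => (eps_flip i).2)).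
by rewrite card_loop_colourings // mulnC.
Qed.
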